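(* Suppose there are at least three states ($n\ge3$). If an updating rule respects the Blackwell order for a prior $\mu$ in the relative interior of $\Delta$ and its distortion function $\varphi=\varphi^{\mu}$ produces a contractive error but does not produce an expansive error, then $\varphi$ is occasionally stubborn.
   Context: Let $\Theta$ be a finite set of states, $|\Theta|=n$, and $\Delta=\Delta(\Theta)$ the simplex of beliefs, viewed in $\mathbb{R}^{n-1}$. An experiment $\pi:\Theta\to\Delta(S)$ ($S$ finite) with prior $\mu$ induces the Bayesian distribution over posteriors $\rho_B$, a finitely supported distribution on $\Delta$ with mean $\mu$ (every such distribution arises from some experiment). Blackwell order: $\pi\succeq\pi'$ iff $\rho_B'$ is a mean-preserving contraction of $\rho_B$. An updating rule is given, for each prior $\mu$, by a distortion function $\varphi^{\mu}:\Delta\to\Delta$: when the Bayesian posterior is $x$, the decision maker holds belief $\varphi^{\mu}(x)$. For a compact action set $A$, continuous $u:A\times\Theta\to\mathbb{R}$, and consistent choice $a^*:\Delta\to A$ (i.e. $a^*(y)\in\arg\max_{a}\mathbb{E}_y u(a,\theta)$ for all $y$), let $W(x)=\mathbb{E}_x u(a^*(\varphi^{\mu}(x)),\theta)$. The rule respects the Blackwell order for $\mu$ if for all such $A,u,a^*$ and all $\pi\succeq\pi'$, $\mathbb{E}_{\rho_B}W\ge\mathbb{E}_{\rho_B'}W$. For $x,y\in\Delta$, $\ell(x,y)$ is the closed segment between them and $\ell^{\circ}(x,y)=\ell(x,y)\setminus\{x,y\}$. $\varphi$ has an expansive error at $x$ if $\varphi(x)\notin\ell(x,\mu)$, and a contractive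 error at $x$ if $\varphi(x)\in\ell(x,\mu)$ and $\varphi(x)\ne x$; $\varphi$ produces an expansive (contractive) error if it has one at some $x$. Faces of $\Delta$ include vertices, edges, and $\Delta$ itself. Let $\hat{\mathcal E}$ be the set of vertices $e$ with $\varphi(e)\neq e$, and $\hat{\mathcal S}$ the set of faces containing some $x$ with $\varphi(x)\ne x$; $\hat{\mathcal S}_m$ denotes its $m$-dimensional members. $\varphi$ is occasionally stubborn if either $\varphi(x)=x$ for all $x$, or there is a single $x^*\in\Delta$ such that: (i) for every $S\in\hat{\mathcal S}$ of dimension $\ge2$, $\varphi(x)=x^*$ for all $x$ in the relative interior of $S$; (ii) for every edge $S\in\hat{\mathcal S}_1$, $\varphi(x)=x^*$ for all $x$ in the relative interior of $S$, except that if $x^*$ lies in the relative interior of an edge $S_1'\in\hat{\mathcal S}_1$, then $S_1'$ may instead satisfy: there is a vertex $e'$ of $S_1'$ with $\varphi(x)=x^*$ for all $x\in\ell^{\circ}(e',x^* )$ and $\varphi(x)=x$ for all $x\in S_1'\setminus\ell^{\circ}(e',x^* )$; (iii) $\varphi(e)\in\ell(x^*,e)$ for every $e\in\hat{\mathcal E}$. *)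

From HB Require Import structures.
From mathcomp Require Import all_boot all_order all_algebra.
From mathcomp Require Import boolp classical_sets reals topology normedtype.
Import numFieldNormedType.Exports.

Set Implicit Arguments.
Unset Strict Implicit.
Unset Printing Implicit Defensive.

Import Order.TTheory GRing.Theory Num.Theory.
Local Open Scope ring_scope.

(* States are 'I_n; beliefs are row vectors x : 'rV[R]_n, x 0 θ = prob of θ. *)

Definition simplex (R : realType) (n : nat) (x : 'rV[R]_n) : Prop :=
  (forall i, 0 <= x 0 i) /\ \sum_i x 0 i = 1.

Definition rint_simplex (R : realType) (n : nat) (x : 'rV[R]_n) : Prop :=
  (forall i, 0 < x 0 i) /\ \sum_i x 0 i = 1.

Definition segment (R : realType) (n : nat) (x y z : 'rV[R]_n) : Prop :=
  exists t : R, 0 <= t <= 1 /\ z = t *: x + (1 - t) *: y.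

Definition open_segment (R : realType) (n : nat) (x y z : 'rV[R]_n) : Prop :=
  segment x y z /\ z <> x /\ z <> y.

Definition vertex (R : realType) (n : nat) (i : 'I_n) : 'rV[R]_n := delta_mx 0 i.

(* Faces of the simplex are indexed by their (nonempty) vertex sets F;
   the face has dimension #|F| - 1. *)
Definition in_face (R : realType) (n : nat) (F : {set 'I_n}) (x : 'rV[R]_n) : Prop :=
  simplex x /\ (forall i, i \notin F -> x 0 i = 0).

Definition relint_face (R : realType) (n : nat) (F : {set 'I_n}) (x : 'rV[R]_n) : Prop :=
  simplex x /\ (forall i, (i \in F) <-> 0 < x 0 i).

Definition experiment (R : realType) (n : nat) (S : finType) (pi : 'I_n -> S -> R) : Prop :=
  (forall th s, 0 <= pi th s) /\ (forall th, \sum_s pi th s = 1).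

Definition sigprob (R : realType) (n : nat) (S : finType) (mu : 'rV[R]_n)
  (pi : 'I_n -> S -> R) (s : S) : R := \sum_th mu 0 th * pi th s.

(* Bayesian posterior after signal s (only relevant when sigprob > 0) *)
Definition posterior (R : realType) (n : nat) (S : finType) (mu : 'rV[R]_n)
  (pi : 'I_n -> S -> R) (s : S) : 'rV[R]_n :=
  \row_th (mu 0 th * pi th s / sigprob mu pi s).

(* E_{rho_B} W : rho_B puts mass sigprob s on posterior s *)
Definition expect_post (R : realType) (n : nat) (S : finType) (mu : 'rV[R]_n)
  (pi : 'I_n -> S -> R) (W : 'rV[R]_n -> R) : R :=
  \sum_s sigprob mu pi s * W (posterior mu pi s).

(* Blackwell order pi >= pi' : rho_B' is a mean-preserving contraction of rho_B,
   i.e. there is a coupling w of the two distributions over posteriors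
   (indexed by signals) such that the conditional mean of the pi-posterior
   given the pi'-posterior is the pi'-posterior. *)
Definition blackwell_geq (R : realType) (n : nat) (S S' : finType) (mu : 'rV[R]_n)
  (pi : 'I_n -> S -> R) (pi' : 'I_n -> S' -> R) : Prop :=
  exists w : S' -> S -> R,
    (forall s' s, 0 <= w s' s) /\
    (forall s, \sum_s' w s' s = sigprob mu pi s) /\
    (forall s', \sum_s w s' s = sigprob mu pi' s') /\
    (forall s', \sum_s w s' s *: posterior mu pi s = sigprob mu pi' s' *: posterior mu pi' s').

Definition exp_util (R : realType) (n : nat) (T : Type) (u : T -> 'I_n -> R)
  (y : 'rV[R]_n) (a : T) : R := \sum_th y 0 th * u a th.

Definition Wfun (R : realType) (n : nat) (T : Type) (u : T -> 'I_n -> R)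
  (astar : 'rV[R]_n -> T) (phi : 'rV[R]_n -> 'rV[R]_n) (x : 'rV[R]_n) : R :=
  exp_util u x (astar (phi x)).

(* The rule (with distortion phi for prior mu) respects the Blackwell order:
   for every compact action set A (a compact topological space), every
   u : A x Θ -> R continuous (Θ finite discrete, so: continuous in a for each θ),
   every consistent choice a*, and all experiments pi >= pi'. *)
Definition respects_blackwell (R : realType) (n : nat) (mu : 'rV[R]_n)
  (phi : 'rV[R]_n -> 'rV[R]_n) : Prop :=
  forall (A : topologicalType) (u : A -> 'I_n -> R) (astar : 'rV[R]_n -> A),
    compact [set: A] ->
    (forall th, continuous (fun a => u a th)) ->
    (forall y, simplex y -> forall a, exp_util u y a <= exp_util u y (astar y)) ->
    forall (S S' : finType) (pi : 'I_n -> S -> R) (pi' : 'I_n -> S' -> R),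
      experiment pi -> experiment pi' -> blackwell_geq mu pi pi' ->
      expect_post mu pi' (Wfun u astar phi) <= expect_post mu pi (Wfun u astar phi).

Definition expansive_at (R : realType) (n : nat) (mu : 'rV[R]_n)
  (phi : 'rV[R]_n -> 'rV[R]_n) (x : 'rV[R]_n) : Prop :=
  ~ segment x mu (phi x).

Definition contractive_at (R : realType) (n : nat) (mu : 'rV[R]_n)
  (phi : 'rV[R]_n -> 'rV[R]_n) (x : 'rV[R]_n) : Prop :=
  segment x mu (phi x) /\ phi x <> x.

Definition produces_expansive (R : realType) (n : nat) (mu : 'rV[R]_n)
  (phi : 'rV[R]_n -> 'rV[R]_n) : Prop :=
  exists x, simplex x /\ expansive_at mu phi x.

Definition produces_contractive (R : realType) (n : nat) (mu : 'rV[R]_n)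
  (phi : 'rV[R]_n -> 'rV[R]_n) : Prop :=
  exists x, simplex x /\ contractive_at mu phi x.

Definition in_Shat (R : realType) (n : nat) (phi : 'rV[R]_n -> 'rV[R]_n)
  (F : {set 'I_n}) : Prop :=
  exists x, in_face F x /\ phi x <> x.

Definition occasionally_stubborn (R : realType) (n : nat)
  (phi : 'rV[R]_n -> 'rV[R]_n) : Prop :=
  (forall x, simplex x -> phi x = x) \/
  exists xs : 'rV[R]_n, simplex xs /\
    (forall F, in_Shat phi F -> (3 <= #|F|)%N ->
       forall x, relint_face F x -> phi x = xs) /\
    (forall F, in_Shat phi F -> #|F| = 2%N ->
       (forall x, relint_face F x -> phi x = xs) \/
       (relint_face F xs /\
        exists2 i, i \in F &
          (forall x, open_segment (vertex R i) xs x -> phi x = xs) /\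
          (forall x, in_face F x -> ~ open_segment (vertex R i) xs x -> phi x = x))) /\
    (forall i, phi (vertex R i) <> vertex R i ->
       segment xs (vertex R i) (phi (vertex R i))).

(* Without expansive errors phi x lies on the segment [x, mu] for every
   belief x, and mu serves as x*.  Respecting the Blackwell order makes every
   value function W convex along segments of the simplex: mu splits into a
   posterior z and some w, and splitting z further into x and y is a Blackwell
   improvement.  Convexity forces stubbornness: if phi x <> x and x, y, mu are
   linearly independent, a bet on a linear functional which is accepted at
   phi x, rejected at phi z for z in ]x, y[ with phi z <> mu, and loses at x
   and y would give W z = 0 > t W x + (1 - t) W y.  In a face containing some
   x with phi x <> x this first gives a point z of the face with phi z = mu
   (between x and a suitable vertex), and every relative interior point of the
   face lies strictly between z and another point of the face. *)

From HB Require Import structures.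
From mathcomp Require Import all_boot all_order all_algebra.
From mathcomp Require Import boolp classical_sets reals topology normedtype.
From mathcomp Require Import lra ring zify.
Import numFieldNormedType.Exports.
Import Order.TTheory GRing.Theory Num.Theory.
Local Open Scope ring_scope.
Set Implicit Arguments.
Unset Strict Implicit.
Unset Printing Implicit Defensive.

Lemma sum_option (V : nmodType) (T : finType) (F : option T -> V) :
  \sum_o F o = F None + \sum_t F (Some t).
Proof.
by rewrite ![index_enum _]unlock [@Finite.enum in LHS]unlock /= big_cons big_map.
Qed.

Lemma exists_pos_lower_bound (R : realFieldType) (I : finType) (P : pred I) (f : I -> R) :
  (forall i, P i -> 0 < f i) -> exists2 e, 0 < e & forall i, P i -> e <= f i.
Proof.
move=> f_gt0; set s := \sum_(i | P i) (f i)^-1.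
have s_ge0 : 0 <= s by apply: sumr_ge0 => i Pi; rewrite invr_ge0 ltW ?f_gt0.
exists (1 + s)^-1 => [|i Pi]; first by rewrite invr_gt0; lra.
rewrite -[f i]invrK lef_pV2 ?posrE ?invr_gt0 ?f_gt0 //; last lra.
rewrite /s (bigD1 i) //=.
have : 0 <= \sum_(j | P j && (j != i)) (f j)^-1.
  by apply: sumr_ge0 => j /andP[Pj _]; rewrite invr_ge0 ltW ?f_gt0.
lra.
Qed.

Section LinearIndependence.
Variables (F : fieldType) (n : nat).
Implicit Types (a b c w x : 'rV[F]_n).

Definition lin_indep2 a b :=
  forall be ga : F, be *: a + ga *: b = 0 -> be = 0 /\ ga = 0.

Definition lin_indep3 a b c :=
  forall al be ga : F, al *: a + be *: b + ga *: c = 0 -> [/\ al = 0, be = 0 & ga = 0].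

Lemma sum_coord_comb (s t : F) a b :
  \sum_k (s *: a + t *: b) 0 k = s * \sum_k a 0 k + t * \sum_k b 0 k.
Proof. by under eq_bigr do rewrite !mxE; rewrite big_split /= -!mulr_sumr. Qed.

Lemma mulmx_comb00 (s t : F) a b (f : 'cV[F]_n) :
  ((s *: a + t *: b) *m f) 0 0 = s * (a *m f) 0 0 + t * (b *m f) 0 0.
Proof. by rewrite mulmxDl -!scalemxAl !mxE. Qed.

Lemma lin_indep2_sum1 a b :
  \sum_k a 0 k = 1 -> \sum_k b 0 k = 1 -> a <> b -> lin_indep2 a b.
Proof.
move=> a1 b1 ab be ga abE.
have ga_opp : ga = - be.
  have := congr1 (fun v : 'rV[F]_n => \sum_k v 0 k) abE; rewrite /= sum_coord_comb a1 b1.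
  rewrite !mulr1 big1 => [/eqP|k]; last by rewrite mxE.
  by rewrite addr_eq0 => /eqP ->; rewrite opprK.
move: abE; rewrite ga_opp scaleNr -scalerBr => /eqP.
rewrite scaler_eq0 subr_eq0 => /orP[/eqP be0|/eqP //].
by rewrite be0 oppr0.
Qed.

Lemma lin_indep3_neq13 a b c : lin_indep3 a b c -> a <> c.
Proof.
move=> abc ac; have [/eqP] : [/\ (1 : F) = 0, (0 : F) = 0 & (-1 : F) = 0].
  by apply: abc; rewrite ac scale0r addr0 scaleN1r scale1r subrr.
by rewrite oner_eq0.
Qed.

Lemma lin_indep3_row_free a b c : lin_indep3 a b c -> row_free (col_mx a (col_mx b c)).
Proof.
move=> abc; apply/inj_row_free => v.
rewrite -[v]hsubmxK -[rsubmx v]hsubmxK !mul_row_col.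
rewrite [lsubmx v]mx11_scalar [lsubmx (rsubmx v)]mx11_scalar.
rewrite [rsubmx (rsubmx v)]mx11_scalar !mul_scalar_mx addrA => /abc[-> -> ->].
by rewrite !raddf0 !row_mx0.
Qed.

Lemma lin_indep3_dual a b c (X Y Z : F) : lin_indep3 a b c ->
  exists f : 'cV[F]_n, [/\ (a *m f) 0 0 = X, (b *m f) 0 0 = Y & (c *m f) 0 0 = Z].
Proof.
move=> /lin_indep3_row_free/row_freeP[B abcB].
exists (B *m col_mx X%:M (col_mx Y%:M Z%:M)).
move: (congr1 (mulmx^~ (col_mx X%:M (col_mx Y%:M Z%:M))) abcB).
rewrite /= mul1mx -mulmxA !mul_col_mx => /eq_col_mx[-> /eq_col_mx[-> ->]].
by rewrite !mxE.
Qed.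

Lemma lin_indep3_span a b c : lin_indep2 b c -> ~ lin_indep3 a b c ->
  exists be ga : F, a = be *: b + ga *: c.
Proof.
move=> bc; rewrite /lin_indep3.
move=> /existsNP[al /existsNP[be /existsNP[ga /not_implyP[abc nz]]]].
have al_neq0 : al != 0.
  apply: contra_notN nz => /eqP al0.
  have [be0 ga0] : be = 0 /\ ga = 0 by apply: bc; rewrite -abc al0 scale0r add0r.
  by split.
exists (- (al^-1 * be)), (- (al^-1 * ga)).
rewrite -[a](scalerK al_neq0); move/eqP: abc; rewrite -addrA addr_eq0 => /eqP ->.
by rewrite scalerN scalerDr !scalerA opprD !scaleNr.
Qed.

Lemma lin_indep3_line_choice a b c w (t1 t2 : F) :
  lin_indep3 a b c -> lin_indep2 w c -> t1 != t2 ->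
  lin_indep3 (t1 *: a + (1 - t1) *: b) w c \/ lin_indep3 (t2 *: a + (1 - t2) *: b) w c.
Proof.
move=> abc wc t12; apply: contrapT => /not_orP[].
move=> /(lin_indep3_span wc)[be1 [ga1 E1]] /(lin_indep3_span wc)[be2 [ga2 E2]].
have coef : (be2 * t1 - be1 * t2) *: a + (be2 * (1 - t1) - be1 * (1 - t2)) *: b
    + (be1 * ga2 - be2 * ga1) *: c = 0.
  have -> : (be2 * t1 - be1 * t2) *: a + (be2 * (1 - t1) - be1 * (1 - t2)) *: b
      + (be1 * ga2 - be2 * ga1) *: c = be2 *: (t1 *: a + (1 - t1) *: b)
      - be1 *: (t2 *: a + (1 - t2) *: b) + (be1 * ga2 - be2 * ga1) *: c.
    by apply/rowP => k; rewrite !mxE; ring.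
  by rewrite E1 E2; apply/rowP => k; rewrite !mxE; ring.
have [e1 e2 _] := abc _ _ _ coef.
have be21 : be2 = be1.
  have : be2 - be1 = (be2 * t1 - be1 * t2) + (be2 * (1 - t1) - be1 * (1 - t2)) by ring.
  by rewrite e1 e2 addr0 => /eqP; rewrite subr_eq0 => /eqP.
have be1_0 : be1 = 0.
  move: e1; rewrite be21 -mulrBr => /eqP; rewrite mulf_eq0 subr_eq0 (negbTE t12) orbF.
  by move/eqP.
have [t1_0 t1_1 _] : [/\ t1 = 0, 1 - t1 = 0 & - ga1 = 0].
  by apply: abc; rewrite E1 be1_0 scale0r add0r scaleNr subrr.
by move/eqP: t1_1; rewrite t1_0 subr0 oner_eq0.
Qed.

Lemma lin_indep3_of_comb a b c (s t : F) :
  lin_indep3 a (s *: a + t *: b) c -> t != 0 -> lin_indep3 a b c.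
Proof.
move=> abc t_neq0 al be ga E.
have E' : (al - be * s / t) *: a + (be / t) *: (s *: a + t *: b) + ga *: c = 0.
  rewrite -E; apply/rowP => k; rewrite !mxE; field; exact: t_neq0.
have [al' be' ga0] := abc _ _ _ E'.
have be0 : be = 0 by move/eqP: be'; rewrite mulf_eq0 invr_eq0 (negbTE t_neq0) orbF => /eqP.
by move: al'; rewrite be0 mul0r mul0r subr0.
Qed.

Lemma lin_indep3_vertex_minor x c (i j k : 'I_n) :
  j != i -> k != i -> x 0 j * c 0 k - x 0 k * c 0 j != 0 -> lin_indep3 x (delta_mx 0 i) c.
Proof.
move=> ji ki minor al be ga E.
have coord l : al * x 0 l + be * (l == i)%:R + ga * c 0 l = 0.
  by move: (congr1 (fun v : 'rV[F]_n => v 0 l) E); rewrite !mxE.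
have := coord j; have := coord k; have := coord i.
rewrite eqxx (negbTE ji) (negbTE ki) !mulr0 !addr0 mulr1 => Ei Ek Ej.
have al0 : al = 0.
  have : al * (x 0 j * c 0 k - x 0 k * c 0 j) =
      c 0 k * (al * x 0 j + ga * c 0 j) - c 0 j * (al * x 0 k + ga * c 0 k) by ring.
  by rewrite Ej Ek !mulr0 subr0 => /eqP; rewrite mulf_eq0 (negbTE minor) orbF => /eqP.
have ga0 : ga = 0.
  have : ga * (x 0 j * c 0 k - x 0 k * c 0 j) =
      x 0 j * (al * x 0 k + ga * c 0 k) - x 0 k * (al * x 0 j + ga * c 0 j) by ring.
  by rewrite Ej Ek !mulr0 subr0 => /eqP; rewrite mulf_eq0 (negbTE minor) orbF => /eqP.
by split=> //; move: Ei; rewrite al0 ga0 !mul0r addr0 add0r.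
Qed.

Lemma exists_minor_neq0 x c : \sum_k x 0 k = 1 -> \sum_k c 0 k = 1 -> x <> c ->
  exists j k, x 0 j * c 0 k - x 0 k * c 0 j != 0.
Proof.
move=> x1 c1 xc; apply: contrapT => no_minor; apply: xc; apply/rowP => j.
have E k : x 0 j * c 0 k = x 0 k * c 0 j.
  by apply/eqP; rewrite -subr_eq0; apply: contra_notT no_minor => nz; exists j, k.
by rewrite -[x 0 j]mulr1 -c1 mulr_sumr (eq_bigr _ (fun k _ => E k)) -mulr_suml x1 mul1r.
Qed.

End LinearIndependence.

Section Simplex.
Variables (R : realType) (n : nat).
Implicit Types (x y z : 'rV[R]_n) (i k : 'I_n).

Lemma rint_simplexW x : rint_simplex x -> simplex x.
Proof. by case=> x_gt0 x1; split=> // k; exact: ltW. Qed.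

Lemma simplex_le1 x k : simplex x -> x 0 k <= 1.
Proof. by case=> x_ge0 <-; rewrite (bigD1 k) //= lerDl sumr_ge0. Qed.

Lemma simplex_conv x y (t : R) : simplex x -> simplex y -> 0 <= t <= 1 ->
  simplex (t *: x + (1 - t) *: y).
Proof.
move=> [x_ge0 x1] [y_ge0 y1] /andP[t0 t1]; split; last first.
  by rewrite sum_coord_comb x1 y1; ring.
by move=> k; rewrite !mxE addr_ge0 ?mulr_ge0 ?subr_ge0.
Qed.

Lemma simplex_exists_gt0 x : simplex x -> exists k, 0 < x 0 k.
Proof.
move=> [x_ge0 x1]; apply: contrapT => /forallNP x_le0.
have : \sum_k x 0 k = 0.
  by apply: big1 => k _; apply/eqP; rewrite eq_le x_ge0 andbT leNgt; apply/negP/x_le0.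
by rewrite x1 => /eqP; rewrite oner_eq0.
Qed.

Lemma vertexE i k : vertex R i 0 k = (k == i)%:R.
Proof. by rewrite mxE. Qed.

Lemma simplex_vertex i : simplex (vertex R i).
Proof.
split=> [k|]; first by rewrite vertexE ler0n.
by rewrite (bigD1 i) //= vertexE eqxx big1 ?addr0 // => k /negbTE ki; rewrite vertexE ki.
Qed.

Lemma segment_sym x y z : segment x y z -> segment y x z.
Proof.
move=> [t [/andP[t0 t1] ->]]; exists (1 - t); split; last by rewrite subKr addrC.
by rewrite subr_ge0 t1 lerBlDl lerDr.
Qed.

End Simplex.

Section Faces.
Variables (R : realType) (n : nat).
Implicit Types (x y z w : 'rV[R]_n) (F : {set 'I_n}) (i : 'I_n).

Lemma in_face_vertex F i : i \in F -> in_face F (vertex R i).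
Proof.
move=> iF; split=> [|k kF]; first exact: simplex_vertex.
by rewrite vertexE; case: eqP kF => // ->; rewrite iF.
Qed.

Lemma in_face_conv F x y (t : R) : in_face F x -> in_face F y -> 0 <= t <= 1 ->
  in_face F (t *: x + (1 - t) *: y).
Proof.
move=> [sx Fx] [sy Fy] t01; split=> [|k kF]; first exact: simplex_conv.
by rewrite !mxE Fx ?Fy // !mulr0 addr0.
Qed.

Lemma relint_face_between F z w : in_face F z -> relint_face F w ->
  exists y s, [/\ simplex y, 0 < s < 1 & w = s *: z + (1 - s) *: y].
Proof.
move=> [sz Fz] [sw Fw].
have [e e_gt0 e_le] := exists_pos_lower_bound (fun k kF => (Fw k).1 kF).
exists ((1 + e) *: w + (- e) *: z), (e / (1 + e)); split.
- split=> [k|]; last by rewrite sum_coord_comb sw.2 sz.2; ring.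
  rewrite !mxE; have [kF|kF] := boolP (k \in F).
    by have := e_le k kF; have := simplex_le1 k sz; have := sz.1 k; nra.
  have wk0 : w 0 k = 0.
    by apply/eqP; rewrite eq_le sw.1 andbT leNgt; apply: contra kF => /(Fw k).2.
  by rewrite wk0 Fz // !mulr0 addr0.
- by rewrite divr_gt0 ?ltr_pdivrMr /=; lra.
- by apply/rowP => k; rewrite !mxE; field; lra.
Qed.

Lemma exists_ord_neq2 (j k : 'I_n) : (3 <= n)%N -> exists i, i != j /\ i != k.
Proof.
move=> n3; suff /card_gt0P[i] : (0 < #|~: [set j; k]|)%N.
  by rewrite !inE negb_or => /andP; exists i.
have := cardsC [set j; k]; rewrite cards2 card_ord.
by case: (j != k) => /=; lia.
Qed.

Lemma exists_vertex_lin_indep3 (mu x : 'rV[R]_n) F :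
  (3 <= n)%N -> rint_simplex mu -> (2 <= #|F|)%N -> in_face F x -> x <> mu ->
  exists2 i, i \in F & lin_indep3 x (vertex R i) mu.
Proof.
move=> n3 [mu_gt0 mu1] F2 [sx Fx] xmu.
have [[j jF]|Fall] := pselect (exists j, j \notin F).
  have [k xk_gt0] := simplex_exists_gt0 sx.
  have kF : k \in F by apply: contraLR xk_gt0 => /Fx ->; rewrite ltxx.
  have : (0 < #|F :\ k|)%N by move: F2; rewrite (cardsD1 k F) kF add1n ltnS.
  move=> /card_gt0P[i]; rewrite in_setD1 => /andP[ik iF].
  exists i => //; apply: (@lin_indep3_vertex_minor _ _ _ _ i j k).
  - by apply: contraNneq jF => ->.
  - by rewrite eq_sym.
  - by rewrite Fx // mul0r sub0r oppr_eq0 mulf_neq0 // gt_eqF.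
have [j [k minor]] := exists_minor_neq0 sx.2 mu1 xmu.
have [i [ij ik]] := exists_ord_neq2 j k n3.
exists i; first by apply: contra_notT Fall => iF; exists i.
by apply: (@lin_indep3_vertex_minor _ _ _ _ i j k) => //; rewrite eq_sym.
Qed.

End Faces.

Section SplittingExperiment.
Variables (R : realType) (n : nat) (mu : 'rV[R]_n).
Hypothesis mu_gt0 : forall th, 0 < mu 0 th.

Definition splitting (S : finType) (q : S -> R) (v : S -> 'rV[R]_n) : Prop :=
  [/\ forall s, 0 < q s, forall s, simplex (v s) & \sum_s q s *: v s = mu].

Definition splitting_experiment (S : finType) (q : S -> R) (v : S -> 'rV[R]_n) :
  'I_n -> S -> R := fun th s => q s * v s 0 th / mu 0 th.

Section OneSplitting.
Variables (S : finType) (q : S -> R) (v : S -> 'rV[R]_n).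
Hypothesis qv : splitting q v.

Lemma sigprob_splitting s : sigprob mu (splitting_experiment q v) s = q s.
Proof.
have [_ /(_ s)[_ vs1] _] := qv.
rewrite /sigprob /splitting_experiment.
under eq_bigr do rewrite mulrC divfK ?gt_eqF //.
by rewrite -mulr_sumr vs1 mulr1.
Qed.

Lemma posterior_splitting s : posterior mu (splitting_experiment q v) s = v s.
Proof.
have [q_gt0 _ _] := qv.
apply/rowP => th; rewrite !mxE sigprob_splitting /splitting_experiment.
by field; rewrite !gt_eqF.
Qed.

Lemma experiment_splitting : experiment (splitting_experiment q v).
Proof.
have [q_gt0 sv qv_mu] := qv; split=> th.
  by move=> s; rewrite divr_ge0 ?mulr_ge0 ?(sv s).1 // ltW.
rewrite /splitting_experiment -mulr_suml.
have -> : \sum_s q s * v s 0 th = mu 0 th.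
  by rewrite -qv_mu summxE; apply: eq_bigr => s _; rewrite mxE.
by rewrite divff ?gt_eqF.
Qed.

Lemma expect_post_splitting W :
  expect_post mu (splitting_experiment q v) W = \sum_s q s * W (v s).
Proof. by apply: eq_bigr => s _; rewrite sigprob_splitting posterior_splitting. Qed.

End OneSplitting.

Lemma blackwell_geq_splitting (S S' : finType) (q : S -> R) (v : S -> 'rV[R]_n)
    (q' : S' -> R) (v' : S' -> 'rV[R]_n) (c : S' -> S -> R) :
  splitting q v -> splitting q' v' ->
  (forall s' s, 0 <= c s' s) ->
  (forall s, \sum_s' c s' s = q s) ->
  (forall s', \sum_s c s' s = q' s') ->
  (forall s', \sum_s c s' s *: v s = q' s' *: v' s') ->
  blackwell_geq mu (splitting_experiment q v) (splitting_experiment q' v').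
Proof.
move=> qv qv' c_ge0 c_col c_row c_mean; exists c; split=> //.
split=> [s|]; first by rewrite sigprob_splitting.
split=> s'; first by rewrite sigprob_splitting.
under eq_bigr do rewrite posterior_splitting //.
by rewrite sigprob_splitting // posterior_splitting.
Qed.

End SplittingExperiment.

Section BlackwellConvexity.
Variables (R : realType) (n : nat) (mu : 'rV[R]_n) (phi : 'rV[R]_n -> 'rV[R]_n).
Hypothesis mu_rint : rint_simplex mu.
Hypothesis phi_blackwell : respects_blackwell mu phi.

Lemma exists_split_through z : simplex z ->
  exists q w, [/\ 0 < q < 1, simplex w & q *: z + (1 - q) *: w = mu].
Proof.
move=> sz; have [mu_gt0 mu1] := mu_rint.
have [p p_gt0 p_le] := exists_pos_lower_bound (fun k (_ : predT k) => mu_gt0 k).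
pose q := p / (1 + p).
have q_gt0 : 0 < q by rewrite divr_gt0 //; lra.
have q_lt1 : q < 1 by rewrite ltr_pdivrMr; lra.
have q_le k : q <= mu 0 k.
  by apply: le_trans (p_le k isT); rewrite ler_pdivrMr; nra.
exists q, ((1 - q)^-1 *: mu + (- (q / (1 - q))) *: z); split.
- by rewrite q_gt0 q_lt1.
- split=> [k|]; last by rewrite sum_coord_comb mu1 sz.2; field; lra.
  have := simplex_le1 k sz; have := sz.1 k; have := q_le k => ? ? ?.
  have -> : ((1 - q)^-1 *: mu + (- (q / (1 - q))) *: z) 0 k =
      (1 - q)^-1 * (mu 0 k - q * z 0 k) by rewrite !mxE; field; lra.
  by rewrite mulr_ge0 ?invr_ge0; nra.
- by apply/rowP => k; rewrite !mxE; field; lra.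
Qed.

Lemma respects_blackwell_convex (A : topologicalType) (u : A -> 'I_n -> R)
    (astar : 'rV[R]_n -> A) :
  compact [set: A] -> (forall th, continuous (fun a => u a th)) ->
  (forall y, simplex y -> forall a, exp_util u y a <= exp_util u y (astar y)) ->
  forall x y (t : R), simplex x -> simplex y -> 0 < t < 1 ->
  Wfun u astar phi (t *: x + (1 - t) *: y) <=
    t * Wfun u astar phi x + (1 - t) * Wfun u astar phi y.
Proof.
move=> cA cu cons x y t sx sy /andP[t_gt0 t_lt1].
set z := t *: x + (1 - t) *: y; set W := Wfun u astar phi.
have sz : simplex z by apply: simplex_conv; rewrite ?ltW.
have [q [w [/andP[q_gt0 q_lt1] sw zw_mu]]] := exists_split_through sz.
(* the finer experiment splits the posterior z of the coarser one into x and y *)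
pose qf (o : option bool) := if o is Some b then q * (if b then t else 1 - t) else 1 - q.
pose vf (o : option bool) := if o is Some b then (if b then x else y) else w.
pose qc (b : bool) := if b then q else 1 - q.
pose vc (b : bool) := if b then z else w.
pose c (b : bool) (o : option bool) := if isSome o == b then qf o else 0.
have split_f : splitting mu qf vf.
  split=> [[[]|]|[[]|]|] //=; [exact: mulr_gt0 | rewrite mulr_gt0 //; lra | lra |].
  rewrite sum_option big_bool /= -zw_mu /z.
  by apply/rowP => k; rewrite !mxE; ring.
have split_c : splitting mu qc vc.
  by split=> [[]|[]|] //=; [lra | rewrite big_bool].
have c_ge0 b o : 0 <= c b o.
  by rewrite /c /qf; case: o => [[]|]; case: b => //=; rewrite ?mulr_ge0; lra.
have qfc : blackwell_geq mu (splitting_experiment mu qf vf) (splitting_experiment mu qc vc).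
  apply: (blackwell_geq_splitting mu_rint.1 split_f split_c c_ge0).
  - by case=> [[]|]; rewrite big_bool /c /= ?addr0 ?add0r.
  - by case; rewrite sum_option big_bool /c /qf /qc /= ?addr0 ?add0r //; ring.
  - case; rewrite sum_option big_bool /c /qf /qc /vf /vc /= !scale0r ?addr0 ?add0r //.
    by apply/rowP => k; rewrite !mxE; ring.
have := phi_blackwell cA cu cons (experiment_splitting mu_rint.1 split_f)
  (experiment_splitting mu_rint.1 split_c) qfc.
rewrite (expect_post_splitting mu_rint.1 split_f).
rewrite (expect_post_splitting mu_rint.1 split_c) sum_option !big_bool /= -/W => W_le.
by rewrite -(ler_pM2l q_gt0); lra.
Qed.

End BlackwellConvexity.

Section Bet.
Variables (R : realType) (n : nat).

Definition bet (f : 'cV[R]_n) (b : bool) (th : 'I_n) : R := if b then f th 0 else 0.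

Definition take_bet (f : 'cV[R]_n) (y : 'rV[R]_n) : bool := 0 < (y *m f) 0 0.

Lemma exp_util_bet f y b : exp_util (bet f) y b = if b then (y *m f) 0 0 else 0.
Proof. by case: b; rewrite /exp_util /bet ?mxE // big1 // => k; rewrite mulr0. Qed.

Lemma bet_continuous f th : continuous (fun b => bet f b th).
Proof. by apply/continuousP => A _; exact: discrete_open. Qed.

Lemma take_bet_optimal f y b : exp_util (bet f) y b <= exp_util (bet f) y (take_bet f y).
Proof. by rewrite !exp_util_bet /take_bet; case: b; case: ltP => //; lra. Qed.

Lemma Wfun_bet f (phi : 'rV[R]_n -> 'rV[R]_n) x :
  Wfun (bet f) (take_bet f) phi x = if 0 < (phi x *m f) 0 0 then (x *m f) 0 0 else 0.
Proof. by rewrite /Wfun exp_util_bet. Qed.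

End Bet.

Section Stubborn.
Variables (R : realType) (n : nat) (mu : 'rV[R]_n) (phi : 'rV[R]_n -> 'rV[R]_n).
Hypothesis mu_rint : rint_simplex mu.
Hypothesis phi_blackwell : respects_blackwell mu phi.
Hypothesis phi_segment : forall x, simplex x -> segment x mu (phi x).

Lemma phi_mu : phi mu = mu.
Proof.
have [t [_ ->]] := phi_segment (rint_simplexW mu_rint).
by rewrite -scalerDl addrC subrK scale1r.
Qed.

Lemma stubborn_open_segment x y (t : R) :
  simplex x -> simplex y -> phi x <> x -> 0 < t < 1 -> lin_indep3 x y mu ->
  phi (t *: x + (1 - t) *: y) = mu.
Proof.
move=> sx sy phix t01 xy_mu; have /andP[t_gt0 t_lt1] := t01.
have [a [/andP[a_ge0 a_le1] phixE]] := phi_segment sx.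
have {phix} a_lt1 : a < 1.
  rewrite lt_neqAle a_le1 andbT; apply: contra_notN phix => /eqP a1.
  by rewrite phixE a1 subrr scale0r addr0 scale1r.
have t01w : 0 <= t <= 1 by rewrite !ltW.
have [r [/andP[r_ge0 r_le1] phizE]] := phi_segment (simplex_conv sx sy t01w).
have [r0|r_neq0] := eqVneq r 0; first by rewrite phizE r0 scale0r add0r subr0 scale1r.
have r_gt0 : 0 < r by rewrite lt_def r_neq0.
exfalso.
(* the bet is accepted at phi x and rejected at phi z, and it loses at x and y *)
pose K := (1 - a)^-1.
pose Y := - (1 + (1 - r) * K / (r * (1 - t))).
have Y_lt0 : Y < 0.
  suff : 0 <= (1 - r) * K / (r * (1 - t)) by rewrite /Y; lra.
  by rewrite /K divr_ge0 ?mulr_ge0 ?invr_ge0 //; lra.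
have [f [fx fy fmu]] := lin_indep3_dual (-1) Y K xy_mu.
have := respects_blackwell_convex mu_rint phi_blackwell bool_compact (@bet_continuous R n f)
  (fun y _ => @take_bet_optimal R n f y) sx sy t01.
rewrite !Wfun_bet phixE phizE !mulmx_comb00 fx fy fmu.
have -> : a * -1 + (1 - a) * K = 1 - a by rewrite /K; field; lra.
have -> : r * (t * -1 + (1 - t) * Y) + (1 - r) * K = - r by rewrite /Y; field; lra.
rewrite subr_gt0 a_lt1 oppr_gt0 ltNge (ltW r_gt0) /=.
have : (1 - t) * Y < 0 by rewrite pmulr_rlt0 ?subr_gt0.
by case: ifP => _; lra.
Qed.

Section ThreeStates.
Hypothesis n_ge3 : (3 <= n)%N.

Lemma stubborn_relint_face F w : in_Shat phi F -> (2 <= #|F|)%N -> relint_face F w ->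
  phi w = mu.
Proof.
move=> [x [Fx phix]] F2 Fw.
have [->|/eqP w_neq_mu] := eqVneq w mu; first exact: phi_mu.
have x_neq_mu : x <> mu by move=> xmu; apply: phix; rewrite xmu phi_mu.
have [i iF xi_mu] := exists_vertex_lin_indep3 n_ge3 mu_rint F2 Fx x_neq_mu.
have w_mu := lin_indep2_sum1 Fw.1.2 mu_rint.2 w_neq_mu.
have [t t01 zw_mu] : exists2 t : R, 0 < t < 1 &
    lin_indep3 (t *: x + (1 - t) *: vertex R i) w mu.
  have t12 : (1 / 3 : R) != 2 / 3 by apply/eqP; lra.
  by case: (lin_indep3_line_choice xi_mu w_mu t12); [exists (1 / 3)|exists (2 / 3)];
    rewrite // !ltr_pdivrMr ?divr_gt0 //; lra.
set z := t *: x + (1 - t) *: vertex R i in zw_mu.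
have Fz : in_face F z.
  have t01w : 0 <= t <= 1 by case/andP: t01 => t_gt0 t_lt1; rewrite !ltW.
  by rewrite /z; apply: in_face_conv => //; apply: in_face_vertex.
have phiz : phi z = mu.
  by apply: stubborn_open_segment => //; [exact: Fx.1 | exact: simplex_vertex].
have [y [s [sy s01 wE]]] := relint_face_between Fz Fw.
have zy_mu : lin_indep3 z y mu.
  apply: (lin_indep3_of_comb (s := s) (t := 1 - s)); first by rewrite -wE.
  by case/andP: s01 => _ s_lt1; rewrite subr_eq0 gt_eqF.
rewrite wE; apply: stubborn_open_segment => //; first exact: Fz.1.
by rewrite phiz => /esym; exact: lin_indep3_neq13 zw_mu.
Qed.

End ThreeStates.
End Stubborn.

Unset Implicit Arguments.

Theorem proposition2 (R : realType) (n : nat) (mu : 'rV[R]_n)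
  (phi : 'rV[R]_n -> 'rV[R]_n) :
  (3 <= n)%N ->
  rint_simplex mu ->
  (forall x, simplex x -> simplex (phi x)) ->
  respects_blackwell mu phi ->
  produces_contractive mu phi ->
  ~ produces_expansive mu phi ->
  occasionally_stubborn phi.
Proof.
move=> n_ge3 mu_rint _ phi_blackwell _ no_expansive.
have phi_segment x : simplex x -> segment x mu (phi x).
  by move=> sx; apply: contrapT => expansive_x; apply: no_expansive; exists x.
have stubborn := stubborn_relint_face mu_rint phi_blackwell phi_segment n_ge3.
right; exists mu; split; first exact: rint_simplexW.
split; [|split].
- by move=> F FS F3 x Fx; apply: stubborn FS (ltnW F3) Fx.
- by move=> F FS F2; left=> x Fx; apply: stubborn FS _ Fx; rewrite F2.
- by move=> i _; apply/segment_sym/phi_segment/simplex_vertex.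
Qed.
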